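(* Consider the queueing system in the context under MaxWeight with a diagonal matrix $\Delta$ with positive diagonal entries, in overload ($\rho\notin\mathcal{P}$). Let $H=\limsup_{t\to\infty}\langle \frac{X(t)}{t},\Delta\frac{X(t)}{t}\rangle$ and let $\eta$ be the limit of $X(t_c)/t_c$ along an increasing unbounded sequence $\{t_c\}$ with $\langle\eta,\Delta\eta\rangle=H$. Then for any increasing unbounded sequence $\{t_m\}$ with $\lim_{m\to\infty}X(t_m)/t_m=\mu$, $$\langle\mu,\Delta\eta\rangle\ge\langle\eta,\Delta\eta\rangle\implies \mu=\eta.$$
   Context: Model: $Q$ queues, finite set $\mathcal{S}=\{S_1,\dots,S_N\}\subset\mathbb{R}^Q_{\ge0}$, discrete time. Arrivals $A(t)$ with $0\le A_q(t)\le\bar A_q<\infty$ and $\rho_q=\lim_{t\to\infty}\frac1t\sum_{s=0}^{t-1}A_q(s)\in(0,\infty)$. Departures $D_q(t)=\min\{S_q(t),X_q(t)\}$, $X(t+1)=X(t)+A(t)-D(t)$, $X(0)=0$, with $S(t)\in\arg\max_{S\in\mathcal{S}}\langle S,\Delta X(t)\rangle$. Stability region $\mathcal{P}=\{r\in\mathbb{R}^Q_{\ge0}: r\le\sum_n\alpha_nS_n\text{ for some }\alpha_n\ge0,\sum_n\alpha_n=1\}$. *)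

From HB Require Import structures.
From mathcomp Require Import all_boot all_order all_algebra.
From mathcomp Require Import all_classical all_reals all_analysis.
Set Implicit Arguments. Unset Strict Implicit. Unset Printing Implicit Defensive.
Import Order.TTheory GRing.Theory Num.Theory.
Import numFieldNormedType.Exports.
Local Open Scope classical_set_scope.
Local Open Scope ring_scope.

(* Weighted inner product <x, Delta y> for Delta = diag(delta). *)
Definition dinner (R : realType) (Q : nat) (delta : 'I_Q -> R)
  (x y : 'I_Q -> R) : R := \sum_(q < Q) x q * (delta q * y q).

Definition stab_region (R : realType) (Q N : nat) (Svec : 'I_N -> 'I_Q -> R)
  (r : 'I_Q -> R) : Prop :=
  (forall q, 0 <= r q) /\
  exists alpha : 'I_N -> R,
    (forall n, 0 <= alpha n) /\ \sum_(n < N) alpha n = 1 /\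
    forall q, r q <= \sum_(n < N) alpha n * Svec n q.

(* MaxWeight queueing dynamics: X is the queue process, A the arrivals,
   sched t the index of the schedule S(t) = Svec (sched t) chosen at time t. *)
Definition maxweight_dynamics (R : realType) (Q N : nat)
  (Svec : 'I_N -> 'I_Q -> R) (delta : 'I_Q -> R)
  (A X : nat -> 'I_Q -> R) (sched : nat -> 'I_N) : Prop :=
  (forall q, X 0%N q = 0) /\
  (forall t n, dinner delta (Svec n) (X t) <= dinner delta (Svec (sched t)) (X t)) /\
  (forall t q, X t.+1 q = X t q + A t q - Num.min (Svec (sched t) q) (X t q)).

Definition scaled (R : realType) (Q : nat) (X : nat -> 'I_Q -> R) (t : nat)
  : 'I_Q -> R := fun q => X t q / t%:R.

Definition scaled_limit (R : realType) (Q : nat) (X : nat -> 'I_Q -> R)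
  (tm : nat -> nat) (mu : 'I_Q -> R) : Prop :=
  forall q, (fun m => scaled X (tm m) q) @ \oo --> mu q.

Definition incr_unbounded (tm : nat -> nat) : Prop :=
  (forall m, (tm m < tm m.+1)%N) /\ (forall M, exists m, (M <= tm m)%N).

From HB Require Import structures.
From mathcomp Require Import all_boot all_order all_algebra.
From mathcomp Require Import all_classical all_reals all_analysis.
From mathcomp Require Import ring lra.
Import Order.TTheory GRing.Theory Num.Theory.
Import numFieldNormedType.Exports.
Local Open Scope classical_set_scope.
Local Open Scope ring_scope.

(* The weighted inner product is a genuine inner product, so
   |mu - eta|^2 = |mu|^2 - 2 <mu, eta> + |eta|^2.  Since mu is a limit point
   of X(t)/t, |mu|^2 <= limsup |X(t)/t|^2 = |eta|^2, and by hypothesis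
   <mu, eta> >= |eta|^2; hence |mu - eta|^2 <= 0, i.e. mu = eta.  None of the
   queueing structure is needed. *)

Lemma le_limn_esup_subseq {R : realType} {u : (\bar R)^nat} {tm : nat -> nat}
    {l : \bar R} :
  {homo tm : m n / (m < n)%N} -> (fun m => u (tm m)) @ \oo --> l ->
  (l <= limn_esup u)%E.
Proof.
move=> tm_incr ul; rewrite limn_esup_lim; apply: lime_ge; first exact: is_cvg_esups.
apply: nearW => n; apply: (cvge_le _ ul); near=> m.
apply: ereal_sup_ubound; exists (tm m) => //=.
have tm_infl k : (k <= tm k)%N.
  by elim: k => // k ih; apply: leq_ltn_trans ih (tm_incr _ _ _).
by apply: leq_trans (tm_infl m); near: m; exists n.
Unshelve. all: by end_near.
Qed.

Section weighted_inner_product.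
Context {R : realType} {Q : nat} {delta : 'I_Q -> R}.
Local Notation "<< x , y >>" := (dinner delta x y).

Lemma dinnerBB x y : << x - y, x - y >> = << x, x >> - 2 * << x, y >> + << y, y >>.
Proof.
rewrite /dinner mulr_sumr -sumrN -!big_split /=.
by apply: eq_bigr => q _; rewrite !fctE; ring.
Qed.

Lemma cvg_dinner (x y : nat -> 'I_Q -> R) (x0 y0 : 'I_Q -> R) :
  (forall q, (fun m => x m q) @ \oo --> x0 q) ->
  (forall q, (fun m => y m q) @ \oo --> y0 q) ->
  (fun m => << x m, y m >>) @ \oo --> << x0, y0 >>.
Proof.
move=> xx0 yy0; apply: cvg_big => [|q _]; first exact: add_continuous.
by apply: cvgM; [exact: xx0 | apply: cvgM; [exact: cvg_cst | exact: yy0]].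
Qed.

Hypothesis delta_gt0 : forall q, 0 < delta q.

Lemma dinner_self_le0 x : (<< x, x >> <= 0) = (x == 0).
Proof.
have term_ge0 q : 0 <= x q * (delta q * x q).
  by rewrite mulrCA -expr2 mulr_ge0 ?sqr_ge0 ?ltW.
apply/idP/eqP => [|->]; last by rewrite /dinner big1 // => q _; rewrite mul0r.
rewrite le_eqVlt ltNge sumr_ge0 // orbF psumr_eq0 // => /allP x0.
apply/funext => q; have /= := x0 q (mem_index_enum q).
by rewrite mulrCA mulf_eq0 (gt_eqF (delta_gt0 q)) mulf_eq0 orbb => /eqP.
Qed.

End weighted_inner_product.

Theorem lemma5 (R : realType) (Q N : nat)
  (Svec : 'I_N -> 'I_Q -> R) (delta : 'I_Q -> R)
  (A : nat -> 'I_Q -> R) (Abar rho : 'I_Q -> R)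
  (X : nat -> 'I_Q -> R) (sched : nat -> 'I_N)
  (tc tm : nat -> nat) (eta mu : 'I_Q -> R) :
  (forall n q, 0 <= Svec n q) ->
  (forall q, 0 < delta q) ->
  (forall t q, 0 <= A t q <= Abar q) ->
  (forall q, (fun t => (\sum_(s < t) A s q) / t%:R) @ \oo --> rho q) ->
  (forall q, 0 < rho q) ->
  maxweight_dynamics Svec delta A X sched ->
  ~ stab_region Svec rho ->
  incr_unbounded tc ->
  scaled_limit X tc eta ->
  ((dinner delta eta eta)%:E =
     limn_esup (fun t => (dinner delta (scaled X t) (scaled X t))%:E))%E ->
  incr_unbounded tm ->
  scaled_limit X tm mu ->
  dinner delta mu eta >= dinner delta eta eta ->
  mu = eta.
Proof.
move=> _ delta_gt0 _ _ _ _ _ _ _ eta_limsup [tm_incr _] mu_lim mu_eta_ge.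
have tm_homo : {homo tm : m n / (m < n)%N} by apply: homo_ltn; first exact: ltn_trans.
have mu_le_eta : dinner delta mu mu <= dinner delta eta eta.
  rewrite -lee_fin eta_limsup; apply: (le_limn_esup_subseq tm_homo).
  by apply: cvg_EFin; [exact: nearW | exact: cvg_dinner].
apply/eqP; rewrite -subr_eq0 -(dinner_self_le0 delta_gt0) dinnerBB.
lra.
Qed.
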